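(* For $1\le a\le n$ and all $u\in\mathbb C$, \[ T^{(a)}_1(u)=\sum_{1\le i_1<i_2<\cdots<i_a\le N}\ \prod_{k=1}^a x_{i_k}\Bigl(u+\frac a2-k\Bigr). \]
   Context: Fix an integer $n\ge 2$ and put $N=2n+2$. Let $Q_a(u)$ ($1\le a\le n$, $u\in\mathbb C$) be algebraically independent commuting indeterminates. Put $d_a=1+\delta_{an}$, $Y_a(u)=Q_a(u-\frac{d_a}{2})/Q_a(u+\frac{d_a}{2})$ for $1\le a\le n$, $Y_0(u)=1$. Let $J=\{1\prec2\prec\cdots\prec n\prec\bar n\prec\cdots\prec\bar2\prec\bar1\}$ be a totally ordered set. For $1\le a\le n$ set $z_a(u)=\frac{Y_a(u+\frac a2)}{Y_{a-1}(u+\frac{a+1}2)}$, $z_{\bar a}(u)=\frac{Y_{a-1}(u+\frac{2n-a+3}2)}{Y_a(u+\frac{2n-a+4}2)}$; set $x_a(u)=z_a(u)$, $x_{2n+3-a}(u)=z_{\bar a}(u)$ for $1\le a\le n$, and $x_{n+1}(u)=-x_{n+2}(u)=\frac{Q_n(u+\frac n2)Q_n(u+\frac{n+4}2)}{Q_n(u+\frac{n+2}2)^2}$. For $1\le a\le n$ define $T^{(a)}_1(u)$ by $T^{(a)}_1(u+\frac12)=\sum z_{i_1}(u+\frac{a-1}2)z_{i_2}(u+\frac{a-3}2)\cdots z_{i_a}(u-\frac{a-1}2)$, the sum running over $(i_1,\dots,i_a)\in J^a$ with $i_1\prec\cdots\prec i_a$ such that whenever $i_k=c$ and $i_l=\bar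 c$ for some $1\le c\le n$, one has $n+k-l\ge c$. *)

From mathcomp Require Import all_boot all_order all_algebra.
Set Implicit Arguments. Unset Strict Implicit. Unset Printing Implicit Defensive.
Import Order.TTheory GRing.Theory Num.Theory.
Local Open Scope ring_scope.

Section Defs.
(* K : the domain of the spectral parameter u (C in the paper; any number field here)
   F : the field in which the indeterminates Q_a(u) take values *)
Variables (K : numFieldType) (F : fieldType) (n : nat) (Q : nat -> K -> F).

Definition hlf (m : nat) : K := (m%:R) / 2.

Definition dd (a : nat) : nat := if a == n then 2%N else 1%N.

Definition Y (a : nat) (u : K) : F :=
  if a == 0%N then 1 else Q a (u - hlf (dd a)) / Q a (u + hlf (dd a)).

Definition zU (a : nat) (u : K) : F :=
  Y a (u + hlf a) / Y a.-1 (u + hlf a.+1).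

Definition zB (a : nat) (u : K) : F :=
  Y a.-1 (u + hlf (2 * n - a + 3)) / Y a (u + hlf (2 * n - a + 4)).

(* The totally ordered set J = {1 < ... < n < bar n < ... < bar 1} is encoded as
   'I_(2n): position p < n stands for the letter p+1, position p >= n stands
   for bar (2n - p). *)
Definition zJ (j : 'I_(2 * n)) (u : K) : F :=
  if (j < n)%N then zU j.+1 u else zB (2 * n - j) u.

Definition xmid (u : K) : F :=
  Q n (u + hlf n) * Q n (u + hlf (n + 4)) / (Q n (u + hlf (n + 2))) ^+ 2.

Definition x (i : nat) (u : K) : F :=
  if (i <= n)%N then zU i u
  else if i == n.+1 then xmid u
  else if i == n.+2 then - xmid u
  else zB (2 * n + 3 - i) u.

Definition incr (a m : nat) (i : {ffun 'I_a -> 'I_m}) : bool :=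
  [forall k : 'I_a, forall l : 'I_a, (k < l)%N ==> (i k < i l)%N].

(* admissibility: if i_k = c and i_l = bar c then n + k - l >= c *)
Definition admissible (a : nat) (i : {ffun 'I_(a) -> 'I_(2 * n)}) : bool :=
  [forall k : 'I_a, forall l : 'I_a,
     ((i k < n)%N && (n <= i l)%N && (2 * n - i l == (i k).+1)%N)
       ==> ((i k).+1 + l <= n + k)%N].

(* S(u) = sum z_{i_1}(u + (a-1)/2) ... z_{i_a}(u - (a-1)/2);
   the k-th factor (k = 1..a, here k.+1 with k : 'I_a) is evaluated at
   u + (a - (2k - 1))/2. *)
Definition Tsum (a : nat) (u : K) : F :=
  \sum_(i : {ffun 'I_a -> 'I_(2 * n)} | incr i && admissible i)
    \prod_(k < a) zJ (i k) (u + hlf a - hlf (2 * k.+1 - 1)).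

(* T^{(a)}_1 defined by T^{(a)}_1(u + 1/2) = S(u) *)
Definition T1 (a : nat) (u : K) : F := Tsum a (u - hlf 1).

End Defs.

(* Both sides are generating sums of increasing words: the left one over the
   admissible words in the letters 1 < ... < n < bar n < ... < bar 1 with weights
   z, the right one over all increasing words in x_1, ..., x_N.  Removing the
   outermost pair of letters gives the same four-term recursion for both (words
   avoiding the pair, starting with it, ending with it, or both), except that
   admissibility truncates the last term.  By induction on the number m of pairs
   kept, the full sum minus the admissible one over the 2m innermost letters is
   a product of factors z_c(.) z_{bar c}(.) times an admissible sum of the
   complementary length; the step uses that z_c(p) z_{bar c}(p - n + c - 2) does
   not depend on c (the Y's telescope), and the base case that
   z_n(p) z_{bar n}(p - 1) = x_{n+1}(p) x_{n+1}(p - 1).  For words of length at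
   most n the complementary length exceeds the number of letters, so the
   difference vanishes. *)

From mathcomp Require Import all_boot all_order all_algebra.
From mathcomp Require Import zify ring.
Set Implicit Arguments. Unset Strict Implicit. Unset Printing Implicit Defensive.
Import Order.TTheory GRing.Theory Num.Theory.

Lemma big_reindex_inj (R : Type) (idx : R) (op : Monoid.com_law idx) (I J : finType)
    (h : J -> I) (P : pred I) (Q : pred J) (F : I -> R) :
  injective h -> (forall j, P (h j) = Q j) -> (forall i, P i -> exists j, h j = i) ->
  \big[op/idx]_(i | P i) F i = \big[op/idx]_(j | Q j) F (h j).
Proof.
move=> h_inj hPQ h_onto; rewrite -(big_imset (A := [pred j | Q j]) _ (in2W h_inj)).
apply: eq_bigl => i; apply/idP/imsetP => [Pi | [j]].
- by have [j hj] := h_onto i Pi; exists j; rewrite // inE -hPQ hj.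
- by rewrite inE -hPQ => Qj ->.
Qed.

Section IncreasingMaps.

Lemma incrP a m (i : {ffun 'I_a -> 'I_m}) :
  reflect (forall k l : 'I_a, k < l -> i k < i l) (incr i).
Proof.
apply: (iffP forallP) => [H k l | H k].
- by move: (H k) => /forallP /(_ l) /implyP.
- by apply/forallP => l; apply/implyP; apply: H.
Qed.

Lemma incr_le a m (i : {ffun 'I_a -> 'I_m}) (k l : 'I_a) : incr i -> k <= l -> i k <= i l.
Proof.
move=> /incrP i_incr; rewrite leq_eqVlt => /orP [/eqP/val_inj -> // | ?].
exact/ltnW/i_incr.
Qed.

Lemma ffun_val_inj a b (f g : {ffun 'I_a -> 'I_b}) : (forall k, f k = g k :> nat) -> f = g.
Proof. by move=> fg; apply/ffunP => k; apply/val_inj/fg. Qed.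

Variables d m : nat.
Implicit Types j : {ffun 'I_d -> 'I_m}.

Definition widen_ffun j : {ffun 'I_d -> 'I_m.+1} := [ffun k => widen_ord (leqnSn m) (j k)].
Definition shift_ffun j : {ffun 'I_d -> 'I_m.+1} := [ffun k => lift ord0 (j k)].
Definition snoc_ffun j : {ffun 'I_d.+1 -> 'I_m.+1} :=
  [ffun k => if unlift ord_max k is Some k' then widen_ord (leqnSn m) (j k') else ord_max].
Definition cons_ffun j : {ffun 'I_d.+1 -> 'I_m.+1} :=
  [ffun k => if unlift ord0 k is Some k' then lift ord0 (j k') else ord0].

Lemma widen_ffunE j k : widen_ffun j k = j k :> nat.
Proof. by rewrite ffunE. Qed.
Lemma shift_ffunE j k : shift_ffun j k = (j k).+1 :> nat.
Proof. by rewrite ffunE. Qed.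
Lemma snoc_ffun_max j : snoc_ffun j ord_max = m :> nat.
Proof. by rewrite ffunE unlift_none. Qed.
Lemma snoc_ffun_lift j k : snoc_ffun j (lift ord_max k) = j k :> nat.
Proof. by rewrite ffunE liftK. Qed.
Lemma cons_ffun0 j : cons_ffun j ord0 = 0 :> nat.
Proof. by rewrite ffunE unlift_none. Qed.
Lemma cons_ffun_lift j k : cons_ffun j (lift ord0 k) = (j k).+1 :> nat.
Proof. by rewrite ffunE liftK. Qed.

Lemma lift_max_val (k : 'I_d) : lift ord_max k = k :> nat.
Proof. by rewrite /= /bump leqNgt ltn_ord. Qed.

Lemma lift0_val (k : 'I_d) : lift ord0 k = k.+1 :> nat.
Proof. by []. Qed.

Lemma widen_ord_lift_max (k : 'I_d) : widen_ord (leqnSn d) k = lift ord_max k.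
Proof. by apply: val_inj; rewrite /= /bump leqNgt ltn_ord. Qed.

Lemma widen_ffun_inj : injective widen_ffun.
Proof.
by move=> j1 j2 /ffunP E; apply: ffun_val_inj => k; rewrite -!widen_ffunE E.
Qed.
Lemma shift_ffun_inj : injective shift_ffun.
Proof.
by move=> j1 j2 /ffunP E; apply: ffun_val_inj => k; apply: succn_inj; rewrite -!shift_ffunE E.
Qed.
Lemma snoc_ffun_inj : injective snoc_ffun.
Proof.
by move=> j1 j2 /ffunP E; apply: ffun_val_inj => k; rewrite -!snoc_ffun_lift E.
Qed.
Lemma cons_ffun_inj : injective cons_ffun.
Proof.
move=> j1 j2 /ffunP E; apply: ffun_val_inj => k.
by apply: succn_inj; rewrite -!cons_ffun_lift E.
Qed.

Lemma incr_widen_ffun j : incr (widen_ffun j) = incr j.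
Proof. by apply/incrP/incrP => H k l /H; rewrite !widen_ffunE. Qed.
Lemma incr_shift_ffun j : incr (shift_ffun j) = incr j.
Proof. by apply/incrP/incrP => H k l /H; rewrite !shift_ffunE. Qed.

Lemma incr_snoc_ffun j : incr (snoc_ffun j) = incr j.
Proof.
apply/incrP/incrP => H k l.
- by have := H (lift ord_max k) (lift ord_max l); rewrite !snoc_ffun_lift !lift_max_val.
- case: (unliftP ord_max k) => [k' ->|->]; case: (unliftP ord_max l) => [l' ->|->];
    rewrite ?snoc_ffun_lift ?snoc_ffun_max ?lift_max_val //= ?ltnn //.
  + exact: H.
  + by rewrite ltnNge (ltnW (ltn_ord l')).
Qed.

Lemma incr_cons_ffun j : incr (cons_ffun j) = incr j.
Proof.
apply/incrP/incrP => H k l.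
- by have := H (lift ord0 k) (lift ord0 l); rewrite !cons_ffun_lift ltnS.
- case: (unliftP ord0 k) => [k' ->|->]; case: (unliftP ord0 l) => [l' ->|->];
    rewrite ?cons_ffun_lift ?cons_ffun0 //= ltnS; exact: H.
Qed.

Lemma widen_ffun_onto (i : {ffun 'I_d -> 'I_m.+1}) :
  (forall k, i k < m) -> exists j, widen_ffun j = i.
Proof.
move=> lt_m; exists [ffun k => Ordinal (lt_m k)].
by apply: ffun_val_inj => k; rewrite widen_ffunE ffunE.
Qed.

Lemma shift_ffun_onto (i : {ffun 'I_d -> 'I_m.+1}) :
  (forall k, 0 < i k) -> exists j, shift_ffun j = i.
Proof.
move=> gt0; have lt_m k : (i k).-1 < m by rewrite -ltnS prednK.
exists [ffun k => Ordinal (lt_m k)].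
by apply: ffun_val_inj => k; rewrite shift_ffunE ffunE prednK.
Qed.

Lemma snoc_ffun_onto (i : {ffun 'I_d.+1 -> 'I_m.+1}) :
  i ord_max = m :> nat -> (forall k, i (lift ord_max k) < m) -> exists j, snoc_ffun j = i.
Proof.
move=> i_max lt_m; exists [ffun k => Ordinal (lt_m k)].
apply: ffun_val_inj => k; case: (unliftP ord_max k) => [k' ->|->].
- by rewrite snoc_ffun_lift ffunE.
- by rewrite snoc_ffun_max.
Qed.

Lemma cons_ffun_onto (i : {ffun 'I_d.+1 -> 'I_m.+1}) :
  i ord0 = 0 :> nat -> (forall k, 0 < i (lift ord0 k)) -> exists j, cons_ffun j = i.
Proof.
move=> i0 gt0; have lt_m k : (i (lift ord0 k)).-1 < m by rewrite -ltnS prednK.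
exists [ffun k => Ordinal (lt_m k)].
apply: ffun_val_inj => k; case: (unliftP ord0 k) => [k' ->|->].
- by rewrite cons_ffun_lift ffunE prednK.
- by rewrite cons_ffun0.
Qed.

End IncreasingMaps.

Section SumIncreasing.
Variable R : zmodType.
Local Open Scope ring_scope.

Lemma sum_incr_dom0 m (Phi : {ffun 'I_0 -> 'I_m} -> R) :
  \sum_(i | incr i) Phi i = Phi (ffun0 (card_ord 0)).
Proof.
rewrite (big_pred1 (ffun0 (card_ord 0))) // => i /=.
have -> : incr i by apply/incrP => -[].
by symmetry; apply/eqP/ffunP => -[].
Qed.

Lemma sum_incr_cod0 d (Phi : {ffun 'I_d.+1 -> 'I_0} -> R) : \sum_(i | incr i) Phi i = 0.
Proof. by rewrite big_pred0 // => i; case: (i ord0). Qed.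

Lemma sum_incr_split_last d m (Phi : {ffun 'I_d.+1 -> 'I_m.+1} -> R) :
  \sum_(i | incr i) Phi i =
  \sum_(j : {ffun 'I_d.+1 -> 'I_m} | incr j) Phi (widen_ffun j) +
  \sum_(j : {ffun 'I_d -> 'I_m} | incr j) Phi (snoc_ffun j).
Proof.
rewrite (bigID (fun i : {ffun 'I_d.+1 -> 'I_m.+1} => i ord_max == m :> nat)) /= addrC.
congr (_ + _); apply: big_reindex_inj.
- exact: widen_ffun_inj.
- move=> j; rewrite incr_widen_ffun widen_ffunE.
  by case: eqP (ltn_ord (j ord_max)) => [-> | _]; rewrite ?ltnn ?andbT.
- move=> i /andP [i_incr /eqP i_max]; apply: widen_ffun_onto => k.
  have := incr_le i_incr (leq_ord k : (k <= @ord_max d)%N).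
  by move: (ltn_ord (i ord_max)) i_max => /=; lia.
- exact: snoc_ffun_inj.
- by move=> j; rewrite incr_snoc_ffun snoc_ffun_max eqxx andbT.
- move=> i /andP [i_incr /eqP i_max]; apply: snoc_ffun_onto => // k.
  by move: (elimT (incrP _) i_incr (lift ord_max k) ord_max); rewrite i_max lift_max_val; apply.
Qed.

Lemma sum_incr_split_first d m (Phi : {ffun 'I_d.+1 -> 'I_m.+1} -> R) :
  \sum_(i | incr i) Phi i =
  \sum_(j : {ffun 'I_d.+1 -> 'I_m} | incr j) Phi (shift_ffun j) +
  \sum_(j : {ffun 'I_d -> 'I_m} | incr j) Phi (cons_ffun j).
Proof.
rewrite (bigID (fun i : {ffun 'I_d.+1 -> 'I_m.+1} => i ord0 == 0 :> nat)) /= addrC.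
congr (_ + _); apply: big_reindex_inj.
- exact: shift_ffun_inj.
- by move=> j; rewrite incr_shift_ffun shift_ffunE andbT.
- move=> i /andP [i_incr i0]; apply: shift_ffun_onto => k.
  by apply: leq_trans (incr_le i_incr (leq0n k : (@ord0 d <= k)%N)); rewrite lt0n.
- exact: cons_ffun_inj.
- by move=> j; rewrite incr_cons_ffun cons_ffun0 eqxx andbT.
- move=> i /andP [i_incr /eqP i0]; apply: cons_ffun_onto => // k.
  by move: (elimT (incrP _) i_incr ord0 (lift ord0 k)); rewrite i0; apply.
Qed.

End SumIncreasing.

Section WordSums.
Variables (K : numFieldType) (F : fieldType).
Local Open Scope ring_scope.
Implicit Types (g : nat -> K -> F) (v : K).

Definition word_weight d m g (j : {ffun 'I_d -> 'I_m}) v : F :=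
  \prod_(k < d) g (j k) (v - k%:R).

Definition shiftl g : nat -> K -> F := fun p => g p.+1.

Lemma subr_natS v k : v - 1 - k%:R = v - k.+1%:R.
Proof. by rewrite -addrA -opprD nat1r. Qed.

Lemma word_weight_widen d m g (j : {ffun 'I_d -> 'I_m}) v :
  word_weight g (widen_ffun j) v = word_weight g j v.
Proof. by apply: eq_bigr => k _; rewrite widen_ffunE. Qed.

Lemma word_weight_shift d m g (j : {ffun 'I_d -> 'I_m}) v :
  word_weight g (shift_ffun j) v = word_weight (shiftl g) j v.
Proof. by apply: eq_bigr => k _; rewrite shift_ffunE. Qed.

Lemma word_weight_cons d m g (j : {ffun 'I_d -> 'I_m}) v :
  word_weight g (cons_ffun j) v = g 0%N v * word_weight (shiftl g) j (v - 1).
Proof.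
rewrite /word_weight big_ord_recl cons_ffun0 subr0; congr (_ * _).
by apply: eq_bigr => k _; rewrite cons_ffun_lift subr_natS.
Qed.

Lemma word_weight_snoc d m g (j : {ffun 'I_d -> 'I_m}) v :
  word_weight g (snoc_ffun j) v = word_weight g j v * g m (v - d%:R).
Proof.
rewrite /word_weight big_ord_recr /= snoc_ffun_max; congr (_ * _).
by apply: eq_bigr => k _; rewrite widen_ord_lift_max snoc_ffun_lift.
Qed.

Definition incr_sum N g d v : F :=
  \sum_(i : {ffun 'I_d -> 'I_N} | incr i) word_weight g i v.

(* [adm m i] is [admissible m i] with the size [N] of the codomain left free:
   letters [p < m] stand for [p+1], letters [p >= m] for [bar (N - p)]. *)
Definition adm m N d (i : {ffun 'I_d -> 'I_N}) : bool :=
  [forall k : 'I_d, forall l : 'I_d,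
     ((i k < m)%N && (m <= i l)%N && (N - i l == (i k).+1)%N)
       ==> ((i k).+1 + l <= m + k)%N].

Definition adm_sum m N g d v : F :=
  \sum_(i : {ffun 'I_d -> 'I_N} | incr i) (if adm m i then word_weight g i v else 0).

(* Generating sums after adding a new first letter [z] and a new last letter
   [zb] to an alphabet with generating sums [G]; [both k] says whether [z] and
   [zb] may surround an inner word of length [k]. *)
Definition add_pair (z zb : K -> F) (both : nat -> bool) (G : nat -> K -> F) d v : F :=
  G d v + (if d is k.+1 then z v * G k (v - 1) + G k v * zb (v - k%:R) else 0)
  + (if d is k.+2 then (if both k then z v * G k (v - 1) * zb (v - k.+1%:R) else 0) else 0).

Lemma incr_sum0 N g v : incr_sum N g 0 v = 1.
Proof. by rewrite /incr_sum sum_incr_dom0 /word_weight big_ord0. Qed.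

Lemma incr_sum_cod0 g d v : incr_sum 0 g d.+1 v = 0.
Proof. exact: sum_incr_cod0. Qed.

Lemma incr_sum_add_pair M g d v :
  incr_sum M.+2 g d v =
  add_pair (g 0%N) (g M.+1) xpredT (incr_sum M (shiftl g)) d v.
Proof.
case: d => [|d]; first by rewrite /add_pair !incr_sum0 !addr0.
rewrite /incr_sum sum_incr_split_last sum_incr_split_first.
under eq_bigr do rewrite word_weight_widen word_weight_shift.
under [X in _ + X + _]eq_bigr do rewrite word_weight_widen word_weight_cons.
rewrite -mulr_sumr /add_pair -!addrA; congr (_ + (_ + _)).
case: d => [|d].
  by rewrite !sum_incr_dom0 word_weight_snoc /word_weight !big_ord0 /= addr0.
rewrite sum_incr_split_first /=.
under eq_bigr do rewrite word_weight_snoc word_weight_shift.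
under [X in _ + X]eq_bigr do rewrite word_weight_snoc word_weight_cons.
by rewrite -!mulr_suml -mulr_sumr.
Qed.

Lemma admP m N d (i : {ffun 'I_d -> 'I_N}) :
  reflect (forall k l : 'I_d, (i k < m)%N -> (m <= i l)%N -> (N - i l)%N = (i k).+1 ->
             ((i k).+1 + l <= m + k)%N) (adm m i).
Proof.
apply: (iffP forallP) => [H k l lt_m ge_m bar | H k].
- by move: (H k) => /forallP /(_ l) /implyP; apply; rewrite lt_m ge_m bar eqxx.
- by apply/forallP => l; apply/implyP => /andP [/andP [? ?] /eqP]; apply: H.
Qed.

Section AdmEmbeddings.
Variables m d : nat.
Implicit Type j : {ffun 'I_d -> 'I_(2 * m)}.
Local Notation adm' i := (@adm m.+1 (2 * m).+2 _ i).

Lemma adm_widen_shift j : adm' (widen_ffun (shift_ffun j)) = adm m j.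
Proof.
apply/admP/admP => H k l; have := ltn_ord (j l); have := H k l;
  rewrite !widen_ffunE !shift_ffunE; lia.
Qed.

Lemma adm_widen_cons j : adm' (widen_ffun (cons_ffun j)) = adm m j.
Proof.
apply/admP/admP => H k l.
- have := ltn_ord (j l); have := H (lift ord0 k) (lift ord0 l).
  by rewrite !widen_ffunE !cons_ffun_lift !lift0_val; lia.
- case: (unliftP ord0 k) => [k' ->|->]; case: (unliftP ord0 l) => [l' ->|->];
    rewrite !widen_ffunE ?cons_ffun_lift ?cons_ffun0 ?lift0_val /=; try lia.
  all: have := ltn_ord (j l'); try have := H k' l'; lia.
Qed.

Lemma adm_snoc_shift j : adm' (snoc_ffun (shift_ffun j)) = adm m j.
Proof.
apply/admP/admP => H k l.
- have := ltn_ord (j l); have := H (lift ord_max k) (lift ord_max l).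
  by rewrite !snoc_ffun_lift !shift_ffunE !lift_max_val; lia.
- case: (unliftP ord_max k) => [k' ->|->]; case: (unliftP ord_max l) => [l' ->|->];
    rewrite ?snoc_ffun_lift ?shift_ffunE ?snoc_ffun_max ?lift_max_val /=; try lia.
  by have := ltn_ord (j l'); have := H k' l'; lia.
Qed.

(* Both new letters [1] and [bar 1] occur, at distance [d + 1]: admissible
   exactly when [d < m]. *)
Lemma adm_snoc_cons (j : {ffun 'I_d -> 'I_(2 * m)}) :
  adm' (snoc_ffun (cons_ffun j)) = adm m j && (d < m)%N.
Proof.
apply/admP/andP => [H|[/admP H lt_dm] k l].
- split; last first.
    have := H (lift ord_max ord0) ord_max.
    by rewrite snoc_ffun_lift cons_ffun0 snoc_ffun_max lift_max_val /=; lia.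
  apply/admP => k l; have := ltn_ord (j l).
  have := H (lift ord_max (lift ord0 k)) (lift ord_max (lift ord0 l)).
  by rewrite !snoc_ffun_lift !cons_ffun_lift !lift_max_val !lift0_val; lia.
- case: (unliftP ord_max k) => [k' ->|->]; case: (unliftP ord_max l) => [l' ->|->];
    rewrite ?snoc_ffun_lift ?snoc_ffun_max ?lift_max_val /=; try lia.
  all: try case: (unliftP ord0 k') => [k'' ->|->]; try case: (unliftP ord0 l') => [l'' ->|->];
    rewrite ?cons_ffun_lift ?cons_ffun0 ?lift0_val /=; try lia.
  all: have := ltn_ord (j l''); try have := H k'' l''; lia.
Qed.

End AdmEmbeddings.

Lemma adm_ffun0 m N : adm m (ffun0 (card_ord 0) : {ffun 'I_0 -> 'I_N}).
Proof. by apply/forallP => -[]. Qed.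

Lemma adm_sum0 m N g v : adm_sum m N g 0 v = 1.
Proof. by rewrite /adm_sum sum_incr_dom0 adm_ffun0 /word_weight big_ord0. Qed.

Lemma adm_sum_cod0 m g d v : adm_sum m 0 g d.+1 v = 0.
Proof. exact: sum_incr_cod0. Qed.

Lemma adm_sum_add_pair m g d v :
  adm_sum m.+1 (2 * m).+2 g d v =
  add_pair (g 0%N) (g (2 * m).+1) (fun k => (k < m)%N) (adm_sum m (2 * m) (shiftl g)) d v.
Proof.
case: d => [|d]; first by rewrite /add_pair !adm_sum0 !addr0.
rewrite /adm_sum sum_incr_split_last sum_incr_split_first.
under eq_bigr do rewrite adm_widen_shift word_weight_widen word_weight_shift.
under [X in _ + X + _]eq_bigr do
  rewrite adm_widen_cons word_weight_widen word_weight_cons -mulrb -mulrnAr mulrb.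
rewrite -mulr_sumr /add_pair -!addrA; congr (_ + (_ + _)).
case: d => [|d].
  rewrite !sum_incr_dom0 word_weight_snoc /word_weight !big_ord0 /= addr0 adm_ffun0.
  suff -> : adm m.+1 (snoc_ffun (ffun0 (card_ord 0)) : {ffun 'I_1 -> 'I_(2 * m).+2}) by [].
  apply/admP => k l; have -> : k = ord_max by apply: val_inj; rewrite (ord1 k).
  by rewrite snoc_ffun_max; lia.
rewrite sum_incr_split_first /=.
under eq_bigr do
  rewrite adm_snoc_shift word_weight_snoc word_weight_shift -mulrb -mulrnAl mulrb.
under [X in _ + X]eq_bigr do
  rewrite adm_snoc_cons word_weight_snoc word_weight_cons.
rewrite -mulr_suml; congr (_ + _); case: ifP => [_ | _]; last by apply: big1 => j _; rewrite andbF.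
rewrite mulr_sumr mulr_suml; apply: eq_bigr => j _.
by rewrite andbT; case: ifP; rewrite ?mulr0 ?mul0r.
Qed.

Lemma incr_sum_ext N g g' d v : (forall p w, g p w = g' p w) ->
  incr_sum N g d v = incr_sum N g' d v.
Proof. by move=> gg'; apply: eq_bigr => i _; apply: eq_bigr => k _. Qed.

Lemma adm_sum_ext m N g g' d v : (forall p w, g p w = g' p w) ->
  adm_sum m N g d v = adm_sum m N g' d v.
Proof. by move=> gg'; apply: eq_bigr => i _; congr (if _ then _ else _); apply: eq_bigr. Qed.

Lemma add_pair_ext (z z' zb zb' : K -> F) both (G G' : nat -> K -> F) d v :
  (forall w, z w = z' w) -> (forall w, zb w = zb' w) -> (forall d w, G d w = G' d w) ->
  add_pair z zb both G d v = add_pair z' zb' both G' d v.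
Proof. by move=> zz' zbzb' GG'; rewrite /add_pair; case: d => [|[|d]]; rewrite ?zz' ?zbzb' ?GG'. Qed.

(* Integer degrees, zero below 0, keep the index shifts in [Tdefect] uniform. *)
Definition extz (G : nat -> K -> F) (e : int) v : F :=
  if e is Posz k then G k v else 0.

Definition both_term (z zb : K -> F) (both : nat -> bool) (G : nat -> K -> F) (e : int) v : F :=
  if (e - 2)%R is Posz k then (if both k then z v * G k (v - 1) * zb (v - (e - 1)%:~R) else 0)
  else 0.

Lemma extz_add_pair z zb both G e v :
  extz (add_pair z zb both G) e v = extz G e v + z v * extz G (e - 1) (v - 1)
     + extz G (e - 1) v * zb (v - (e - 1)%:~R) + both_term z zb both G e v.
Proof.
rewrite /both_term; case: e => [[|[|k]]|d].
- rewrite (_ : Posz 0 - 1 = Negz 0) 1?(_ : Posz 0 - 2 = Negz 1) //.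
  by rewrite /= /add_pair /= !mulr0 !mul0r !addr0.
- rewrite (_ : Posz 1 - 1 = Posz 0) 1?(_ : Posz 1 - 2 = Negz 0) //.
  by rewrite /= /add_pair /= !addrA.
- rewrite (_ : Posz k.+2 - 1 = Posz k.+1) 1?(_ : Posz k.+2 - 2 = Posz k); try by lia.
  by rewrite /= /add_pair !addrA.
- rewrite (_ : Negz d - 1 = Negz d.+1) 1?(_ : Negz d - 2 = Negz d.+2); try by lia.
  by rewrite /= !mulr0 !mul0r !addr0.
Qed.

Definition prod_shift (f : K -> F) (j : nat) v : F := \prod_(i < j) f (v - i%:R).

Lemma prod_shift_recl f j v : prod_shift f j.+1 v = f v * prod_shift f j (v - 1).
Proof.
rewrite /prod_shift big_ord_recl subr0; congr (_ * _).
by apply: eq_bigr => i _; rewrite lift0_val subr_natS.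
Qed.

Lemma prod_shift_recr f j v : prod_shift f j.+1 v = prod_shift f j v * f (v - j%:R).
Proof. by rewrite /prod_shift big_ord_recr. Qed.

Definition pair_prod (z zb : K -> F) (s : K) (j : nat) v : F :=
  prod_shift z j v * prod_shift zb j (v - s).

Section PairProd.
Variables (z zb : K -> F) (s : K) (j : nat) (v : K).
Local Notation P := (pair_prod z zb).

Lemma pair_prodS : P (s + 1) j.+1 v = z v * P s j (v - 1) * zb (v - (s + 1) - j%:R).
Proof.
rewrite /pair_prod prod_shift_recl prod_shift_recr (_ : v - 1 - s = v - (s + 1)) ?mulrA //.
by rewrite opprD addrA addrAC.
Qed.

Lemma pair_prod_mulzU : P (s + 1) j v * z (v - j%:R) = z v * P s j (v - 1).
Proof.
rewrite /pair_prod mulrAC -prod_shift_recr prod_shift_recl.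
by rewrite (_ : v - 1 - s = v - (s + 1)); ring.
Qed.

Lemma pair_prod_mulzB : P (s + 1) j v * zb (v - s) = P s j v * zb (v - s - j%:R).
Proof.
rewrite /pair_prod -!mulrA -prod_shift_recr prod_shift_recl.
by rewrite (_ : v - s - 1 = v - (s + 1)); ring.
Qed.

Lemma pair_prod_mulzUzB : P (s + 1) j v * z (v - j%:R) * zb (v - s) = P s j.+1 v.
Proof.
rewrite /pair_prod prod_shift_recr prod_shift_recl.
by rewrite (_ : v - s - 1 = v - (s + 1)); ring.
Qed.

End PairProd.

End WordSums.

Local Open Scope ring_scope.

Section QSystem.
Variables (K : numFieldType) (F : fieldType) (n : nat) (Q : nat -> K -> F).
Hypothesis Q_neq0 : forall (a : nat) (u : K), (1 <= a <= n)%N -> Q a u != 0.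

Lemma Y_neq0 a u : (a <= n)%N -> Y n Q a u != 0.
Proof.
rewrite /Y; case: a => [|a] an /=; first exact: oner_neq0.
by rewrite mulf_neq0 // ?invr_eq0; apply: Q_neq0; lia.
Qed.

(* The product [z_c(p) z_{bar c}(p - n + c - 2)] does not depend on [c]: the
   [Y]'s telescope. *)
Lemma zU_zB_invariant m p : (m.+2 <= n)%N ->
  zU n Q (n - m.+1) p * zB n Q (n - m.+1) (p - m.+2%:R) =
  zU n Q (n - m) p * zB n Q (n - m) (p - m.+2%:R).
Proof.
move=> mn; set c := (n - m.+1)%N.
have nE : n = (c + m.+1)%N by rewrite /c; lia.
have -> : (n - m = c.+1)%N by rewrite /c; lia.
rewrite /zU /zB /=; set a0 := p + hlf K c.
have E1 : p + hlf K c.+1 = a0 + 2^-1 by rewrite /a0 /hlf; field.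
have E2 : p - m.+2%:R + hlf K (2 * n - c + 3) = a0 + 2^-1.
  by rewrite /a0 (_ : (2 * n - c + 3 = c + 2 * m + 5)%N) /hlf; [field|lia].
have E3 : p - m.+2%:R + hlf K (2 * n - c + 4) = a0 + 1.
  by rewrite /a0 (_ : (2 * n - c + 4 = c + 2 * m + 6)%N) /hlf; [field|lia].
have E4 : p + hlf K c.+2 = a0 + 1 by rewrite /a0 /hlf; field.
have E5 : p - m.+2%:R + hlf K (2 * n - c.+1 + 3) = a0.
  by rewrite /a0 (_ : (2 * n - c.+1 + 3 = c + 2 * m + 4)%N) /hlf; [field|lia].
have E6 : p - m.+2%:R + hlf K (2 * n - c.+1 + 4) = a0 + 2^-1.
  by rewrite /a0 (_ : (2 * n - c.+1 + 4 = c + 2 * m + 5)%N) /hlf; [field|lia].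
rewrite E1 E2 E3 E4 E5 E6 -/a0.
have h1 : Y n Q c.-1 (a0 + 2^-1) != 0 by apply: Y_neq0; lia.
have h2 : Y n Q c.+1 (a0 + 2^-1) != 0 by apply: Y_neq0; lia.
have h3 : Y n Q c (a0 + 1) != 0 by apply: Y_neq0; lia.
by field; rewrite h1 h2 h3.
Qed.

Lemma zU_zB_mid p : (1 <= n)%N ->
  zU n Q n p * zB n Q n (p - 1) = xmid n Q p * xmid n Q (p - 1).
Proof.
move=> n_gt0; rewrite /zU /zB /xmid /Y.
have -> : (n == 0%N) = false by apply/eqP; lia.
rewrite /dd eqxx; set t := p + hlf K n.
have E1 : p + hlf K n - hlf K 2 = t - 1 by rewrite /t /hlf; field.
have E2 : p + hlf K n + hlf K 2 = t + 1 by rewrite /t /hlf; field.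
have E3 : p + hlf K n.+1 = t + 2^-1 by rewrite /t /hlf; field.
have E4 : p - 1 + hlf K (2 * n - n + 3) = t + 2^-1.
  by rewrite /t (_ : (2 * n - n + 3 = n + 3)%N) /hlf; [field|lia].
have E5 : p - 1 + hlf K (2 * n - n + 4) - hlf K 2 = t.
  by rewrite /t (_ : (2 * n - n + 4 = n + 4)%N) /hlf; [field|lia].
have E6 : p - 1 + hlf K (2 * n - n + 4) + hlf K 2 = t + 2.
  by rewrite /t (_ : (2 * n - n + 4 = n + 4)%N) /hlf; [field|lia].
have E7 : p + hlf K (n + 4) = t + 2 by rewrite /t /hlf; field.
have E8 : p + hlf K (n + 2) = t + 1 by rewrite /t /hlf; field.
have E9 : p - 1 + hlf K n = t - 1 by rewrite /t /hlf; field.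
have E10 : p - 1 + hlf K (n + 4) = t + 1 by rewrite /t /hlf; field.
have E11 : p - 1 + hlf K (n + 2) = t by rewrite /t /hlf; field.
rewrite E1 E2 E3 E4 E5 E6 E7 E8 E9 E10 E11 -/t.
have hy : Y n Q n.-1 (t + 2^-1) != 0 by apply: Y_neq0; lia.
rewrite /Y in hy; move: hy; set y := (if _ then _ else _) => hy.
have q2 : Q n t != 0 by apply: Q_neq0; lia.
have q3 : Q n (t + 1) != 0 by apply: Q_neq0; lia.
have q4 : Q n (t + 2) != 0 by apply: Q_neq0; lia.
by field; rewrite q2 q3 q4 hy.
Qed.

Definition zU_in m := zU n Q (n - m).
Definition zB_in m := zB n Q (n - m).

(* [Tadm m d] is the generating sum of admissible words of length [d] in the
   letters [n-m+1 < ... < n < bar n < ... < bar (n-m+1)], and [Tfull m d] the one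
   of all increasing words in the [2m+2] middle letters [x_(n-m+1) ... x_(n+m+2)]. *)
Fixpoint Tadm m : nat -> K -> F :=
  if m is m'.+1 then add_pair (zU_in m') (zB_in m') (fun k => (k < m')%N) (Tadm m')
  else fun d _ => (d == 0)%:R.

Fixpoint Tfull m : nat -> K -> F :=
  if m is m'.+1 then add_pair (zU_in m') (zB_in m') xpredT (Tfull m')
  else add_pair (xmid n Q) (fun u => - xmid n Q u) xpredT (Tadm 0).

Lemma Tadm_vanish m k w : (m < k)%N -> Tadm m k w = 0.
Proof.
elim: m k w => [|m IH] [|[|k]] w //= mk.
rewrite /add_pair ifF ?IH ?mulr0 ?mul0r ?addr0 //; lia.
Qed.

Lemma extz_Tadm_vanish m e w : Posz m < e -> extz (Tadm m) e w = 0.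
Proof. by case: e => // k; rewrite ltz_nat; apply: Tadm_vanish. Qed.

Definition pair_prodz m s (e : int) v : F :=
  if e is Posz j then pair_prod (zU_in m) (zB_in m) s%:R j v else 1.

Lemma pair_prodz_shift m e v : (m.+2 <= n)%N ->
  pair_prodz m.+1 m.+2 e v = pair_prodz m m.+2 e v.
Proof.
case: e => [j|j] mn //=; rewrite /pair_prod /prod_shift -!big_split.
apply: eq_bigr => i _; rewrite (_ : v - m.+2%:R - i%:R = v - i%:R - m.+2%:R).
  exact: zU_zB_invariant.
by rewrite addrAC.
Qed.

(* Closed form of [Tfull m - Tadm m]: minus a product of [e - m - 1] pairs
   [z_c(v - i) z_{bar c}(v - m - 1 - i)], [c = n - m], times the admissible sum
   of the complementary length [2m + 2 - e]. *)
Definition Tdefect m (e : int) v : F :=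
  - pair_prodz m m.+1 (e - Posz m.+1) v *
    extz (Tadm m) (Posz (2 * m.+1) - e) (v - (e - Posz m.+1)%:~R).

Lemma Tfull_sub_Tadm0 e v : (1 <= n)%N ->
  extz (Tfull 0) e v - extz (Tadm 0) e v = Tdefect 0 e v.
Proof.
move=> n_gt0; rewrite /Tdefect; case: e => [[|[|[|k]]]|d].
- by rewrite /= /add_pair /= !addr0 subrr mulr0.
- by rewrite /= /add_pair /= !mulr0n !subr0 mulr1 mul1r subrr mulr0 !addr0.
- rewrite /= /add_pair /= /pair_prodz /pair_prod /prod_shift !big_ord1 /= !subr0.
  by rewrite /zU_in /zB_in subn0 zU_zB_mid // !mulr0 !mul0r !addr0 !add0r !mulr1 mulrN.
- rewrite (_ : Posz 2 - Posz k.+3 = Negz k); last by lia.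
  by rewrite /= /add_pair /= !mulr0 !mul0r !addr0 subrr.
- by rewrite (_ : Posz 2 - Negz d = Posz d.+3) /= ?mulr0 ?subrr //; lia.
Qed.

(* The word with inner part of length [m] surrounded by the new pair, which the
   truncation in [Tadm m.+1] excludes although [Tadm m m] may be nonzero. *)
Definition trunc_defect m (e : int) v : F :=
  if (e - 2)%R is Posz k then
    (if (k < m)%N then 0 else zU_in m v * Tadm m k (v - 1) * zB_in m (v - (e - 1)%:~R))
  else 0.

Lemma trunc_defect0 m e v : (forall k, e - 2 = Posz k -> k != m) -> trunc_defect m e v = 0.
Proof.
rewrite /trunc_defect => H; case E: (e - 2) => [k|k] //; case: ifP => // /negbT km.
by rewrite Tadm_vanish ?mulr0 ?mul0r //; have := H k E; lia.
Qed.

Lemma both_term_trunc0 m e v : (forall k, e - 2 = Posz k -> (m <= k)%N) ->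
  both_term (zU_in m) (zB_in m) (fun k => (k < m)%N) (Tadm m) e v = 0.
Proof. by rewrite /both_term => H; case E: (e - 2) => [k|k] //; rewrite ltnNge H. Qed.

Lemma both_term_full m e v :
  both_term (zU_in m) (zB_in m) xpredT (Tfull m) e v =
  both_term (zU_in m) (zB_in m) (fun k => (k < m)%N) (Tadm m) e v +
  zU_in m v * (extz (Tfull m) (e - 2) (v - 1) - extz (Tadm m) (e - 2) (v - 1)) *
    zB_in m (v - (e - 1)%:~R) + trunc_defect m e v.
Proof.
rewrite /both_term /trunc_defect; case: (e - 2) => [k|k] /=; last by ring.
by case: ifP => _; ring.
Qed.

Section DefectStep.
Variables (m : nat) (e : int) (v : K).
Local Notation P := (pair_prodz m m.+2 (e - Posz m.+2) v).
Local Notation w := (v - (e - Posz m.+2)%:~R).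
Local Notation e' := (Posz (2 * m.+2) - e).

(* Expanding both sides of [Tfull_sub_Tadm] at [m.+1] by [extz_add_pair], the
   four parts match with the roles of [both] and [none] exchanged. *)
Lemma Tdefect_both :
  zU_in m v * Tdefect m (e - 2) (v - 1) * zB_in m (v - (e - 1)%:~R) = - P * extz (Tadm m) e' w.
Proof.
rewrite /Tdefect (_ : Posz (2 * m.+1) - (e - 2) = e'); last by lia.
rewrite (_ : v - 1 - (e - 2 - Posz m.+1)%:~R = w); last by ring.
have [lt_me'|] := ltrP (Posz m) e'; first by rewrite extz_Tadm_vanish // !mulr0 mul0r.
case: e => [d|d] le_e'm; last by exfalso; move: le_e'm; lia.
have [j ->] : exists j, d = (j + m.+3)%N by exists (d - m.+3)%N; lia.
rewrite (_ : Posz (j + m.+3) - 2 - Posz m.+1 = Posz j); last by lia.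
rewrite (_ : Posz (j + m.+3) - Posz m.+2 = Posz j.+1); last by lia.
rewrite /pair_prodz -(natr1 m.+1) pair_prodS.
rewrite (_ : v - (m.+1%:R + 1) - j%:R = v - (Posz (j + m.+3) - 1)%:~R); last by ring.
ring.
Qed.

Lemma Tdefect_first :
  zU_in m v * Tdefect m (e - 1) (v - 1) = - P * (zU_in m w * extz (Tadm m) (e' - 1) (w - 1)).
Proof.
rewrite /Tdefect (_ : Posz (2 * m.+1) - (e - 1) = e' - 1); last by lia.
rewrite (_ : v - 1 - (e - 1 - Posz m.+1)%:~R = w - 1); last by ring.
have [lt_me'|] := ltrP (Posz m) (e' - 1); first by rewrite extz_Tadm_vanish // !mulr0.
case: e => [d|d] le_e'm; last by exfalso; move: le_e'm; lia.
have [j ->] : exists j, d = (j + m.+2)%N by exists (d - m.+2)%N; lia.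
rewrite (_ : Posz (j + m.+2) - 1 - Posz m.+1 = Posz j); last by lia.
rewrite (_ : Posz (j + m.+2) - Posz m.+2 = Posz j); last by lia.
rewrite /pair_prodz -(natr1 m.+1) /=; set A := extz _ _ _.
have E := pair_prod_mulzU (zU_in m) (zB_in m) m.+1%:R j v.
transitivity (- (zU_in m v * pair_prod (zU_in m) (zB_in m) m.+1%:R j (v - 1)) * A); first by ring.
by rewrite -E; ring.
Qed.

Lemma Tdefect_last :
  Tdefect m (e - 1) v * zB_in m (v - (e - 1)%:~R) =
  - P * (extz (Tadm m) (e' - 1) w * zB_in m (w - (e' - 1)%:~R)).
Proof.
rewrite /Tdefect (_ : Posz (2 * m.+1) - (e - 1) = e' - 1); last by lia.
rewrite (_ : v - (e - 1 - Posz m.+1)%:~R = w); last by ring.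
have [lt_me'|] := ltrP (Posz m) (e' - 1); first by rewrite extz_Tadm_vanish // !(mulr0, mul0r).
case: e => [d|d] le_e'm; last by exfalso; move: le_e'm; lia.
have [j ->] : exists j, d = (j + m.+2)%N by exists (d - m.+2)%N; lia.
rewrite (_ : Posz (j + m.+2) - 1 - Posz m.+1 = Posz j); last by lia.
rewrite (_ : Posz (j + m.+2) - Posz m.+2 = Posz j); last by lia.
rewrite (_ : v - (Posz j)%:~R - (Posz (2 * m.+2) - Posz (j + m.+2) - 1)%:~R = v - m.+1%:R);
  last by ring.
rewrite (_ : v - (Posz (j + m.+2) - 1)%:~R = v - m.+1%:R - j%:R); last by ring.
rewrite /pair_prodz -(natr1 m.+1); set A := extz _ _ _.
have E := pair_prod_mulzB (zU_in m) (zB_in m) m.+1%:R j v.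
transitivity (- (pair_prod (zU_in m) (zB_in m) m.+1%:R j v * zB_in m (v - m.+1%:R - j%:R)) * A);
  first by ring.
by rewrite -E; ring.
Qed.

Lemma Tdefect_none :
  Tdefect m e v + trunc_defect m e v =
  - P * both_term (zU_in m) (zB_in m) (fun k => (k < m)%N) (Tadm m) e' w.
Proof.
rewrite /Tdefect; case: e => [d|d]; last first.
  rewrite extz_Tadm_vanish ?trunc_defect0 ?both_term_trunc0 ?mulr0 ?addr0 //; move=> *; lia.
have [le_dm|lt_md] := leqP d m.+1.
  rewrite extz_Tadm_vanish ?trunc_defect0 ?both_term_trunc0 ?mulr0 ?addr0 //; move=> *; lia.
have [lt_d|le_d] := leqP (2 * m.+1).+1 d.
  rewrite (_ : Posz (2 * m.+1) - Posz d = Negz (d - (2 * m.+1).+1)); last by lia.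
  rewrite trunc_defect0 ?both_term_trunc0 /= ?mulr0 ?addr0 //; move=> *; lia.
have [->|ne_d] := eqVneq d m.+2.
  rewrite both_term_trunc0; last by move=> *; lia.
  rewrite (_ : Posz m.+2 - Posz m.+1 = Posz 1); last by lia.
  rewrite (_ : Posz (2 * m.+1) - Posz m.+2 = Posz m); last by lia.
  rewrite /trunc_defect (_ : Posz m.+2 - 2 = Posz m); last by lia.
  rewrite ltnn /pair_prodz /pair_prod /prod_shift !big_ord1 /= !subr0.
  rewrite (_ : v - (Posz m.+2 - 1)%:~R = v - m.+1%:R); last by ring.
  by rewrite mulr0; ring.
have [j [-> j_gt0 le_jm]] : exists j, [/\ d = (j + m.+2)%N, (1 <= j)%N & (j <= m)%N].
  by exists (d - m.+2)%N; split; lia.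
rewrite trunc_defect0 ?addr0; last by move=> *; lia.
rewrite (_ : Posz (j + m.+2) - Posz m.+1 = Posz j.+1); last by lia.
rewrite (_ : Posz (j + m.+2) - Posz m.+2 = Posz j); last by lia.
rewrite (_ : Posz (2 * m.+1) - Posz (j + m.+2) = Posz (m - j)); last by lia.
rewrite /both_term (_ : Posz (2 * m.+2) - Posz (j + m.+2) - 2 = Posz (m - j)); last by lia.
rewrite ifT; last by lia.
rewrite /pair_prodz -pair_prod_mulzUzB (natr1 m.+1).
rewrite (_ : v - (Posz j)%:~R - 1 = v - (Posz j.+1)%:~R); last by ring.
rewrite (_ : v - (Posz j)%:~R - (Posz (2 * m.+2) - Posz (j + m.+2) - 1)%:~R = v - m.+1%:R);
  last by ring.
by rewrite /extz; ring.
Qed.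

End DefectStep.

Lemma Tfull_sub_Tadm m e v : (m < n)%N ->
  extz (Tfull m) e v - extz (Tadm m) e v = Tdefect m e v.
Proof.
elim: m e v => [|m IH] e v lt_mn; first exact: Tfull_sub_Tadm0.
have IHr e' w : extz (Tfull m) e' w = extz (Tadm m) e' w + Tdefect m e' w.
  by rewrite -(IH e' w (ltnW lt_mn)) addrC subrK.
rewrite /Tdefect (pair_prodz_shift _ _ lt_mn).
change (Tfull m.+1) with (add_pair (zU_in m) (zB_in m) xpredT (Tfull m)).
change (Tadm m.+1) with (add_pair (zU_in m) (zB_in m) (fun k => (k < m)%N) (Tadm m)).
rewrite !extz_add_pair both_term_full IH ?(ltnW lt_mn) // !IHr.
rewrite !mulrDr -Tdefect_both -Tdefect_first -Tdefect_last -Tdefect_none.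
ring.
Qed.

Lemma extz_Tfull_low m e v : (m < n)%N -> e <= Posz m.+1 ->
  extz (Tfull m) e v = extz (Tadm m) e v.
Proof.
move=> lt_mn le_em; apply/eqP; rewrite -subr_eq0 Tfull_sub_Tadm //.
by rewrite /Tdefect extz_Tadm_vanish ?mulr0 ?oppr0 //; lia.
Qed.

(* Words of length at most [n] never violate the truncation of the outermost
   pair, and [Tfull] and [Tadm] agree in low degrees one level further in. *)
Lemma Tadm_eq_Tfull a v : (0 < n)%N -> (a <= n)%N -> Tadm n a v = Tfull n a v.
Proof.
move=> n_gt0 le_an; have lt_mn : (n.-1 < n)%N by rewrite prednK.
rewrite -[in LHS](prednK n_gt0) -[in RHS](prednK n_gt0) /=.
change (extz (add_pair (zU_in n.-1) (zB_in n.-1) (fun k => (k < n.-1)%N) (Tadm n.-1)) a v =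
  extz (add_pair (zU_in n.-1) (zB_in n.-1) xpredT (Tfull n.-1)) a v).
rewrite !extz_add_pair !extz_Tfull_low //; [congr (_ + _) | lia..].
rewrite /both_term; case E: (Posz a - 2) => [k|k] //; rewrite ifT; last by lia.
by rewrite -[Tfull _ k _]/(extz _ (Posz k) _) extz_Tfull_low //; lia.
Qed.

(* The letters [1 < ... < n < bar n < ... < bar 1] of [T1] and [x_1, ..., x_N],
   keeping only the [2m], resp. [2m+2], middle ones. *)
Definition zletter m : nat -> K -> F :=
  fun p => if (p < m)%N then zU n Q (n.+1 - m + p) else zB n Q (n + m - p).

Definition xletter m : nat -> K -> F :=
  fun p => if (p < m)%N then zU n Q (n.+1 - m + p)
    else if p == m then xmid n Q
    else if p == m.+1 then fun u => - xmid n Q u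
    else zB n Q (n + m.+2 - p).

Lemma adm_sum_Tadm m d v : (m <= n)%N -> adm_sum m (2 * m) (zletter m) d v = Tadm m d v.
Proof.
elim: m d v => [|m IH] d v le_mn; first by case: d => [|d]; rewrite ?adm_sum0 ?adm_sum_cod0.
rewrite (_ : (2 * m.+1 = (2 * m).+2)%N) ?adm_sum_add_pair /=; last by lia.
apply: add_pair_ext => [w | w | d' w].
- by rewrite /zletter /zU_in /=; congr zU; lia.
- by rewrite /zletter /zB_in ifF; [congr zB | ]; lia.
- rewrite -IH; last by lia.
  apply: adm_sum_ext => p w'; rewrite /shiftl /zletter ltnS.
  by case: ifP => _; [congr zU | congr zB]; lia.
Qed.

Lemma incr_sum_Tfull m d v : (m <= n)%N -> incr_sum (2 * m).+2 (xletter m) d v = Tfull m d v.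
Proof.
elim: m d v => [|m IH] d v le_mn.
  rewrite incr_sum_add_pair /=; apply: add_pair_ext => [// | // | d' w].
  by case: d' => [|d']; rewrite ?incr_sum0 ?incr_sum_cod0.
rewrite (_ : (2 * m.+1 = (2 * m).+2)%N) ?incr_sum_add_pair /=; last by lia.
apply: add_pair_ext => [w | w | d' w].
- by rewrite /xletter /zU_in /=; congr zU; lia.
- rewrite /xletter /zB_in ifF 1?ifF 1?ifF; try lia.
  by congr zB; lia.
- rewrite -IH; last by lia.
  apply: incr_sum_ext => p w'; rewrite /shiftl /xletter ltnS !eqSS.
  case: ifP => _; first by congr zU; lia.
  by do 2!case: ifP => // _; congr zB; lia.
Qed.

Lemma T1_adm_sum a u : T1 n Q a u = adm_sum n (2 * n) (zletter n) a (u + hlf K a - 1).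
Proof.
rewrite /T1 /Tsum /adm_sum big_mkcondr; apply: eq_bigr => i _ /=.
change (admissible i) with (adm n i); case: ifP => // _; apply: eq_bigr => k _.
have -> : (2 * k.+1 - 1 = 2 * k + 1)%N by lia.
rewrite /zJ /zletter; case: ifP => _.
- by rewrite (_ : (n.+1 - n + i k = (i k).+1)%N); [congr zU; rewrite /hlf; field | lia].
- by rewrite (_ : (n + n - i k = 2 * n - i k)%N); [congr zB; rewrite /hlf; field | lia].
Qed.

Lemma sum_x_incr_sum a u :
  \sum_(i : {ffun 'I_a -> 'I_(2 * n + 2)} | incr i)
      \prod_(k < a) x n Q (i k).+1 (u + hlf K a - (k.+1)%:R) =
  incr_sum (2 * n).+2 (xletter n) a (u + hlf K a - 1).
Proof.
rewrite addn2; apply: eq_bigr => i _; apply: eq_bigr => k _.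
rewrite (_ : u + hlf K a - k.+1%:R = u + hlf K a - 1 - k%:R); last by ring.
rewrite /x /xletter; have := ltn_ord (i k); move: (nat_of_ord (i k)) => p lt_p.
case: (ltnP p n) => [_ | le_np]; first by congr zU; lia.
by rewrite !eqSS; do 2!case: eqP => // _; congr zB; lia.
Qed.

End QSystem.

Theorem mainTheorem3 (K : numFieldType) (F : fieldType) (n : nat)
  (Q : nat -> K -> F) :
  (2 <= n)%N ->
  (forall (a : nat) (u : K), (1 <= a <= n)%N -> Q a u != 0) ->
  forall (a : nat), (1 <= a <= n)%N -> forall u : K,
    T1 n Q a u =
    \sum_(i : {ffun 'I_a -> 'I_(2 * n + 2)} | incr i)
      \prod_(k < a) x n Q (i k).+1 (u + hlf K a - (k.+1)%:R).
Proof.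
move=> le2n Q_neq0 a /andP [_ le_an] u; have n_gt0 : (0 < n)%N by lia.
rewrite T1_adm_sum sum_x_incr_sum adm_sum_Tadm // incr_sum_Tfull //.
exact: Tadm_eq_Tfull.
Qed.
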